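(* Let $\tau$ be a continuous distributive triangle function on $\Delta^+$, $\Sigma$ a $\sigma$-ring of subsets of $\Omega\ne\emptyset$, $\gamma$ a $\tau$-decomposable measure on $\Sigma$ continuous from below, and $f$ a simple function. If $E_n\in\Sigma$, $E_n\subseteq E_{n+1}$ for all $n$ and $\bigcup_n E_n=E$, then $\lim_{n\to\infty}\int_{E_n} f\,d\gamma=\int_E f\,d\gamma$ (weak limit).
   Context: $\Delta^+$: functions $F:[-\infty,+\infty]\to[0,1]$ non-decreasing, left-continuous on $\mathbb{R}$, $F(x)=0$ for $x\le0$, $F(+\infty)=1$; $\varepsilon_a(x)=1$ if $x>a$, else $0$. Triangle function: symmetric, associative $\tau:\Delta^+\times\Delta^+\to\Delta^+$, non-decreasing in each variable, identity $\varepsilon_0$; $G\oplus H=\tau(G,H)$, $\bigoplus_{k=1}^nG_k=\tau(G_1,\bigoplus_{k=2}^nG_k)$. $c\odot G=\varepsilon_0$ if $c=0$, $(c\odot G)(x)=G(x/c)$ if $c>0$; $\tau$ distributive if $c\odot(G\oplus H)=(c\odot G)\oplus(c\odot H)$ for all $c\ge0$. Convergence in $\Delta^+$ is weak convergence ($G_n(x)\to G(x)$ at every continuity point $x\in\mathbb{R}$ of $G$); $\tau$ continuous if continuous for it. $\tau$-decomposable measure on a ring $\Sigma$: $\gamma:\Sigma\to\Delta^+$, $\gamma_\emptyset=\varepsilon_0$, $\gamma_{E\cup F}=\tau(\gamma_E,\gamma_F)$ for disjoint $E,F$; continuous from below: $\gamma_{E_n}\to\gamma_E$ whenever $E_n\subseteq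 E_{n+1}$, $\bigcup E_n=E$ in $\Sigma$. A simple function is $f=\sum_{i=1}^mx_i\chi_{G_i}$ with $x_i\in[0,\infty)$, $G_i\in\Sigma$ pairwise disjoint, and $\int_Ef\,d\gamma=\bigoplus_{i=1}^mx_i\odot\gamma_{E\cap G_i}$. *)

From Stdlib Require Export Reals List.
Import ListNotations.
Open Scope R_scope.

(* Elements of Delta^+ are represented by their restriction to R :
   F(-oo) = 0 and F(+oo) = 1 are fixed by definition, so the restriction
   determines F. *)
Definition left_cont_at (F : R -> R) (x : R) : Prop :=
  forall e, 0 < e -> exists d, 0 < d /\
    forall y, x - d < y < x -> Rabs (F y - F x) < e.

Definition in_Dplus (F : R -> R) : Prop :=
  (forall x y, x <= y -> F x <= F y) /\
  (forall x, 0 <= F x <= 1) /\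
  (forall x, left_cont_at F x) /\
  (forall x, x <= 0 -> F x = 0).

Definition eps (a : R) : R -> R := fun x => if Rlt_dec a x then 1 else 0.

(* c (.) G, meaningful for c >= 0 *)
Definition smul (c : R) (G : R -> R) : R -> R :=
  if Req_EM_T c 0 then eps 0 else fun x => G (x / c).

Definition cont_point (G : R -> R) (x : R) : Prop :=
  forall e, 0 < e -> exists d, 0 < d /\
    forall y, Rabs (y - x) < d -> Rabs (G y - G x) < e.

Definition wconv (Gn : nat -> R -> R) (G : R -> R) : Prop :=
  forall x, cont_point G x -> Un_cv (fun n => Gn n x) (G x).

Definition pw_le (G H : R -> R) : Prop := forall x, G x <= H x.

Definition triangle_function (tau : (R -> R) -> (R -> R) -> (R -> R)) : Prop :=
  (forall G H, in_Dplus G -> in_Dplus H -> in_Dplus (tau G H)) /\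
  (forall G H, in_Dplus G -> in_Dplus H -> tau G H = tau H G) /\
  (forall G H K, in_Dplus G -> in_Dplus H -> in_Dplus K ->
     tau G (tau H K) = tau (tau G H) K) /\
  (forall G G' H, in_Dplus G -> in_Dplus G' -> in_Dplus H ->
     pw_le G G' -> pw_le (tau G H) (tau G' H)) /\
  (forall G H H', in_Dplus G -> in_Dplus H -> in_Dplus H' ->
     pw_le H H' -> pw_le (tau G H) (tau G H')) /\
  (forall G, in_Dplus G -> tau G (eps 0) = G).

Definition tau_distributive (tau : (R -> R) -> (R -> R) -> (R -> R)) : Prop :=
  forall c G H, 0 <= c -> in_Dplus G -> in_Dplus H ->
    smul c (tau G H) = tau (smul c G) (smul c H).

Definition tau_continuous (tau : (R -> R) -> (R -> R) -> (R -> R)) : Prop :=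
  forall (Gn Hn : nat -> R -> R) G H,
    (forall n, in_Dplus (Gn n)) -> (forall n, in_Dplus (Hn n)) ->
    in_Dplus G -> in_Dplus H ->
    wconv Gn G -> wconv Hn H -> wconv (fun n => tau (Gn n) (Hn n)) (tau G H).

Definition sempty {Omega : Type} : Omega -> Prop := fun _ => False.
Definition sunion {Omega : Type} (A B : Omega -> Prop) : Omega -> Prop :=
  fun w => A w \/ B w.
Definition sinter {Omega : Type} (A B : Omega -> Prop) : Omega -> Prop :=
  fun w => A w /\ B w.
Definition sdiff {Omega : Type} (A B : Omega -> Prop) : Omega -> Prop :=
  fun w => A w /\ ~ B w.
Definition sbigcup {Omega : Type} (A : nat -> Omega -> Prop) : Omega -> Prop :=
  fun w => exists n, A n w.
Definition ssubset {Omega : Type} (A B : Omega -> Prop) : Prop :=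
  forall w, A w -> B w.
Definition sdisjoint {Omega : Type} (A B : Omega -> Prop) : Prop :=
  forall w, A w -> B w -> False.

Definition sigma_ring {Omega : Type} (Sigma : (Omega -> Prop) -> Prop) : Prop :=
  Sigma sempty /\
  (forall A B, Sigma A -> Sigma B -> Sigma (sdiff A B)) /\
  (forall A : nat -> Omega -> Prop, (forall n, Sigma (A n)) -> Sigma (sbigcup A)).

Definition tau_decomposable {Omega : Type} (tau : (R -> R) -> (R -> R) -> (R -> R))
  (Sigma : (Omega -> Prop) -> Prop) (gamma : (Omega -> Prop) -> R -> R) : Prop :=
  (forall E, Sigma E -> in_Dplus (gamma E)) /\
  gamma sempty = eps 0 /\
  (forall E F, Sigma E -> Sigma F -> sdisjoint E F ->
     gamma (sunion E F) = tau (gamma E) (gamma F)).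

Definition cont_from_below {Omega : Type}
  (Sigma : (Omega -> Prop) -> Prop) (gamma : (Omega -> Prop) -> R -> R) : Prop :=
  forall (En : nat -> Omega -> Prop) E,
    (forall n, Sigma (En n)) -> Sigma E ->
    (forall n, ssubset (En n) (En (S n))) -> sbigcup En = E ->
    wconv (fun n => gamma (En n)) (gamma E).

Fixpoint bigtau (tau : (R -> R) -> (R -> R) -> (R -> R)) (l : list (R -> R)) : R -> R :=
  match l with
  | nil => eps 0
  | G :: nil => G
  | G :: t => tau G (bigtau tau t)
  end.

(* A simple function f = sum_i x_i chi_{G_i} is given by its list of pairs (x_i, G_i). *)
Definition simple_repr {Omega : Type} (Sigma : (Omega -> Prop) -> Prop)
  (f : list (R * (Omega -> Prop))) : Prop :=
  (forall p, List.In p f -> 0 <= fst p /\ Sigma (snd p)) /\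
  (forall i j, (i < length f)%nat -> (j < length f)%nat -> i <> j ->
     sdisjoint (snd (List.nth i f (0, sempty))) (snd (List.nth j f (0, sempty)))).

Definition sintegral {Omega : Type} (tau : (R -> R) -> (R -> R) -> (R -> R))
  (gamma : (Omega -> Prop) -> R -> R) (f : list (R * (Omega -> Prop)))
  (E : Omega -> Prop) : R -> R :=
  bigtau tau (List.map (fun p => smul (fst p) (gamma (sinter E (snd p)))) f).

From Stdlib Require Import Classical FunctionalExtensionality PropExtensionality Lra.

(* Since E_n /\ G_i increases to E /\ G_i, continuity from below makes each
   gamma(E_n /\ G_i) converge weakly to gamma(E /\ G_i); dilation by x_i preserves
   weak convergence, and continuity of tau carries the limit through the finite
   tau-sum by induction on its length. *)

Lemma set_ext {Omega : Type} (A B : Omega -> Prop) :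
  (forall w, A w <-> B w) -> A = B.
Proof.
  intros H; apply functional_extensionality; intros w.
  apply propositional_extensionality; apply H.
Qed.

Lemma sigma_ring_inter {Omega : Type} (Sigma : (Omega -> Prop) -> Prop) A B :
  sigma_ring Sigma -> Sigma A -> Sigma B -> Sigma (sinter A B).
Proof.
  intros [_ [Hdiff _]] HA HB.
  replace (sinter A B) with (sdiff A (sdiff A B)).
  - apply Hdiff; auto.
  - apply set_ext; intros w; unfold sdiff, sinter; split.
    + intros [Ha Hn]; split; auto.
      apply NNPP; intros Hb; apply Hn; auto.
    + intros [Ha Hb]; split; auto.
      intros [_ Hn]; auto.
Qed.

Lemma sbigcup_sinter_r {Omega : Type} (A : nat -> Omega -> Prop) B :
  sbigcup (fun n => sinter (A n) B) = sinter (sbigcup A) B.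
Proof.
  apply set_ext; intros w; unfold sbigcup, sinter; firstorder.
Qed.

Lemma in_Dplus_eps0 : in_Dplus (eps 0).
Proof.
  unfold in_Dplus, eps; repeat split.
  - intros x y Hxy; destruct (Rlt_dec 0 x), (Rlt_dec 0 y); lra.
  - destruct (Rlt_dec 0 x); lra.
  - destruct (Rlt_dec 0 x); lra.
  - intros x e He; destruct (Rlt_dec 0 x) as [Hx|Hx].
    + exists x; split; [lra|]; intros y Hy.
      destruct (Rlt_dec 0 y); [|lra].
      rewrite Rminus_diag, Rabs_R0; lra.
    + exists 1; split; [lra|]; intros y Hy.
      destruct (Rlt_dec 0 y); [lra|].
      rewrite Rminus_diag, Rabs_R0; lra.
  - intros x Hx; destruct (Rlt_dec 0 x); lra.
Qed.

Lemma in_Dplus_smul c G : 0 <= c -> in_Dplus G -> in_Dplus (smul c G).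
Proof.
  intros Hc [Hmono [Hbound [Hleft Hneg]]]; unfold smul.
  destruct (Req_EM_T c 0) as [Hc0|Hc0]; [apply in_Dplus_eps0|].
  assert (Hcpos : 0 < c) by lra.
  assert (Hdiv : forall x, x = x / c * c) by (intros; field; lra).
  repeat split.
  - intros x y Hxy; apply Hmono; unfold Rdiv.
    apply Rmult_le_compat_r; [left; apply Rinv_0_lt_compat|]; lra.
  - apply Hbound.
  - apply Hbound.
  - intros x e He; destruct (Hleft (x / c) e He) as [d [Hd Hy]].
    exists (d * c); split; [nra|]; intros y Hy'; apply Hy.
    rewrite (Hdiv x), (Hdiv y) in Hy'; split; nra.
  - intros x Hx; apply Hneg.
    rewrite (Hdiv x) in Hx; nra.
Qed.

Lemma wconv_const G : wconv (fun _ => G) G.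
Proof.
  intros x _ e He; exists 0%nat; intros n _; unfold R_dist.
  rewrite Rminus_diag, Rabs_R0; lra.
Qed.

(* A continuity point x of c (.) G gives the continuity point x / c of G. *)
Lemma wconv_smul c Gn G : 0 <= c -> wconv Gn G ->
  wconv (fun n => smul c (Gn n)) (smul c G).
Proof.
  intros Hc HGn x Hx; unfold smul in *.
  destruct (Req_EM_T c 0) as [Hc0|Hc0]; [apply wconv_const; exact Hx|].
  assert (Hcpos : 0 < c) by lra.
  apply HGn; intros e He; destruct (Hx e He) as [d [Hd Hy]].
  exists (d / c); split; [apply Rdiv_lt_0_compat; lra|]; intros y Hy'.
  specialize (Hy (y * c)).
  replace (y * c / c) with y in Hy by (field; lra).
  apply Hy.
  replace (y * c - x) with ((y - x / c) * c) by (field; lra).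
  rewrite Rabs_mult, (Rabs_right c) by lra.
  apply (Rmult_lt_reg_r (/ c)); [apply Rinv_0_lt_compat; lra|].
  rewrite Rmult_assoc, Rinv_r, Rmult_1_r by lra; exact Hy'.
Qed.

Section TauSums.

Variable tau : (R -> R) -> (R -> R) -> (R -> R).
Hypothesis tau_triangle : triangle_function tau.

Lemma in_Dplus_bigtau (l : list (R -> R)) :
  (forall G, In G l -> in_Dplus G) -> in_Dplus (bigtau tau l).
Proof.
  induction l as [|G [|G' l'] IH]; intros Hl.
  - apply in_Dplus_eps0.
  - apply Hl; left; auto.
  - apply (proj1 tau_triangle).
    + apply Hl; left; auto.
    + apply IH; intros K HK; apply Hl; right; auto.
Qed.

Lemma in_Dplus_bigtau_map {X : Type} (F : X -> R -> R) (l : list X) :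
  (forall p, In p l -> in_Dplus (F p)) -> in_Dplus (bigtau tau (map F l)).
Proof.
  intros HF; apply in_Dplus_bigtau; intros G HG.
  apply in_map_iff in HG; destruct HG as [p [<- Hp]]; auto.
Qed.

Hypothesis tau_cont : tau_continuous tau.

Lemma wconv_bigtau {X : Type} (Fn : nat -> X -> R -> R) (F : X -> R -> R)
  (l : list X) :
  (forall p n, In p l -> in_Dplus (Fn n p)) ->
  (forall p, In p l -> in_Dplus (F p)) ->
  (forall p, In p l -> wconv (fun n => Fn n p) (F p)) ->
  wconv (fun n => bigtau tau (map (Fn n) l)) (bigtau tau (map F l)).
Proof.
  induction l as [|p [|q l'] IH]; intros HFn HF Hconv.
  - apply wconv_const.
  - apply Hconv; left; auto.
  - change (wconv (fun n => tau (Fn n p) (bigtau tau (map (Fn n) (q :: l'))))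
                  (tau (F p) (bigtau tau (map F (q :: l'))))).
    apply tau_cont.
    + intros n; apply HFn; left; auto.
    + intros n; apply in_Dplus_bigtau_map; intros r Hr; apply HFn; right; auto.
    + apply HF; left; auto.
    + apply in_Dplus_bigtau_map; intros r Hr; apply HF; right; auto.
    + apply Hconv; left; auto.
    + apply IH; intros; [apply HFn | apply HF | apply Hconv]; right; auto.
Qed.

End TauSums.

Lemma cont_from_below_sinter {Omega : Type} (Sigma : (Omega -> Prop) -> Prop)
  (gamma : (Omega -> Prop) -> R -> R) (En : nat -> Omega -> Prop) B :
  sigma_ring Sigma -> cont_from_below Sigma gamma ->
  (forall n, Sigma (En n)) -> (forall n, ssubset (En n) (En (S n))) -> Sigma B ->
  wconv (fun n => gamma (sinter (En n) B)) (gamma (sinter (sbigcup En) B)).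
Proof.
  intros Hring Hcont HEn Hinc HB.
  assert (HE : Sigma (sbigcup En)) by (apply Hring; auto).
  apply Hcont.
  - intros n; apply sigma_ring_inter; auto.
  - apply sigma_ring_inter; auto.
  - intros n w [Hw HBw]; split; auto; apply Hinc; auto.
  - apply sbigcup_sinter_r.
Qed.

Theorem lemma5p1 (tau : (R -> R) -> (R -> R) -> (R -> R))
  (Omega : Type) (Sigma : (Omega -> Prop) -> Prop)
  (gamma : (Omega -> Prop) -> R -> R) (f : list (R * (Omega -> Prop)))
  (En : nat -> Omega -> Prop) (E : Omega -> Prop) :
  triangle_function tau -> tau_continuous tau -> tau_distributive tau ->
  inhabited Omega -> sigma_ring Sigma ->
  tau_decomposable tau Sigma gamma -> cont_from_below Sigma gamma ->
  simple_repr Sigma f ->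
  (forall n, Sigma (En n)) -> (forall n, ssubset (En n) (En (S n))) ->
  sbigcup En = E ->
  wconv (fun n => sintegral tau gamma f (En n)) (sintegral tau gamma f E).
Proof.
  intros Htri Hcont _ _ Hring [Hgamma _] Hbelow [Hf _] HEn Hinc <-.
  assert (HE : Sigma (sbigcup En)) by (apply Hring; auto).
  assert (Hterm : forall A p, Sigma A -> In p f ->
            in_Dplus (smul (fst p) (gamma (sinter A (snd p))))).
  { intros A p HA Hp; destruct (Hf p Hp).
    apply in_Dplus_smul, Hgamma, sigma_ring_inter; auto. }
  apply wconv_bigtau; auto.
  intros p Hp; destruct (Hf p Hp).
  apply wconv_smul, (cont_from_below_sinter Sigma); auto.
Qed.
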